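(* Let $m,n\in\mathbb N$, $a\in\mathbb C\setminus\mathbb Z$, $b_1,\dots,b_m\in\mathbb C$, $c_1,\dots,c_m\in\mathbb C\setminus\{0,-1,-2,\dots\}$. Then, as an identity of formal power series in $x=(x_1,\dots,x_m)$, $y=(y_1,\dots,y_n)$, $$\mathrm H_A^{(m,n)}(a,b;c;x,y)=F_A^{(m)}(a,b;c;x)\,J^{(n)}_{-a}(y)+\sum_{k=1}^\infty\sum_{l=1}^k\sum_{\substack{i\in\mathbb Z_{\ge0}^m,\ |i|=k\\ j\in\mathbb Z_{\ge0}^n,\ |j|=l}}\frac{(-1)^{k+l}\,k!\,(k-1)!\,(b)_i}{(l-1)!\,(k-l)!\,(1-a)_l\,(c)_i}\,\frac{x^i}{i!}\frac{y^j}{j!}\,F_A^{(m)}(a+k,b+i;c+i;x)\,J^{(n)}_{-a+l}(y),$$ where $F_A^{(m)}(a+k,b+i;c+i;x)$ means $F_A^{(m)}(a+k,b_1+i_1,\dots,b_m+i_m;c_1+i_1,\dots,c_m+i_m;x)$.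
   Context: Multi-index notation: for $i=(i_1,\dots,i_m)\in\mathbb Z_{\ge0}^m$, $x^i=x_1^{i_1}\cdots x_m^{i_m}$, $i!=i_1!\cdots i_m!$, $|i|=i_1+\dots+i_m$; similarly for $j\in\mathbb Z_{\ge0}^n$ and $y$. Pochhammer symbol $(\lambda)_k=\Gamma(\lambda+k)/\Gamma(\lambda)$ for every integer $k$; $(b)_i:=\prod_{s=1}^m(b_s)_{i_s}$, $(c)_i:=\prod_{s=1}^m(c_s)_{i_s}$. Lauricella function $F_A^{(m)}(a,b;c;x)=F_A^{(m)}(a,b_1,\dots,b_m;c_1,\dots,c_m;x)=\sum_{i\in\mathbb Z_{\ge0}^m}\frac{(a)_{|i|}(b)_i}{(c)_i}\frac{x^i}{i!}$. Bessel function of $n$ variables $J^{(n)}_\alpha(y)=\sum_{j\in\mathbb Z_{\ge0}^n}\frac{(-1)^{|j|}}{(1+\alpha)_{|j|}}\frac{y^j}{j!}$. Confluent function $\mathrm H_A^{(m,n)}(a,b;c;x,y)=\sum_{i\in\mathbb Z_{\ge0}^m,\,j\in\mathbb Z_{\ge0}^n}\frac{(a)_{|i|-|j|}(b)_i}{(c)_i}\frac{x^i}{i!}\frac{y^j}{j!}$. All functions are regarded as formal power series; the infinite sum converges in the formal (degree) topology. *)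

(* Formal power series in x = (x_1..x_m), y = (y_1..y_n)
   with coefficients in a numeric algebraically closed field C (model of ℂ),
   represented by their coefficient functions. *)
From HB Require Import structures.
From mathcomp Require Import all_boot all_order all_algebra.
Set Implicit Arguments. Unset Strict Implicit. Unset Printing Implicit Defensive.
Import Order.TTheory GRing.Theory Num.Theory.
Local Open Scope ring_scope.

Definition midx (m : nat) := {ffun 'I_m -> nat}.

Definition mdeg m (i : midx m) : nat := (\sum_(s < m) i s)%N.

Definition mfact (C : numClosedFieldType) m (i : midx m) : C :=
  \prod_(s < m) ((i s)`!)%:R.

(* Pochhammer symbol (λ)_k for every integer k:
   (λ)_k = λ(λ+1)...(λ+k-1) for k >= 0, (λ)_{-k} = 1/((λ-1)...(λ-k)) *)
Definition poch (C : numClosedFieldType) (x : C) (k : int) : C :=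
  match k with
  | Posz n => \prod_(t < n) (x + t%:R)
  | Negz n => (\prod_(t < n.+1) (x - (t.+1)%:R))^-1
  end.

Definition mpoch (C : numClosedFieldType) m (b : 'I_m -> C) (i : midx m) : C :=
  \prod_(s < m) poch (b s) (Posz (i s)).

Definition fps (C : numClosedFieldType) m n := midx m -> midx n -> C.

Definition of_bounded m N (p : {ffun 'I_m -> 'I_N}) : midx m :=
  [ffun s => nat_of_ord (p s)].

Definition msub m (i p : midx m) : midx m := [ffun s => (i s - p s)%N].

Definition fps_mul (C : numClosedFieldType) m n (f g : fps C m n) : fps C m n :=
  fun I J =>
    \sum_(p : {ffun 'I_m -> 'I_(mdeg I).+1} | [forall s, (p s <= I s)%N])
      \sum_(q : {ffun 'I_n -> 'I_(mdeg J).+1} | [forall s, (q s <= J s)%N])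
        f (of_bounded p) (of_bounded q) *
        g (msub I (of_bounded p)) (msub J (of_bounded q)).

Definition fps_add (C : numClosedFieldType) m n (f g : fps C m n) : fps C m n :=
  fun I J => f I J + g I J.

(* convergence of sum_{k>=0} u k to s in the formal (degree) topology:
   every coefficient of the partial sums is eventually constant equal to
   the corresponding coefficient of s *)
Definition fps_hasSum (C : numClosedFieldType) m n (u : nat -> fps C m n)
  (s : fps C m n) : Prop :=
  forall I J, exists K, forall N, (K <= N)%N ->
    \sum_(k < N) u k I J = s I J.

Definition fps_mono (C : numClosedFieldType) m n (i : midx m) (j : midx n)
  : fps C m n := fun I J => if (I == i) && (J == j) then 1 else 0.

Definition mzero m : midx m := [ffun => 0%N].

Definition FA (C : numClosedFieldType) m n (a : C) (b c : 'I_m -> C)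
  : fps C m n := fun I J =>
  if J == mzero n then
    poch a (Posz (mdeg I)) * mpoch b I / mpoch c I / mfact C I
  else 0.

Definition BesselJ (C : numClosedFieldType) m n (alpha : C) : fps C m n :=
  fun I J =>
  if I == mzero m then
    (-1) ^+ (mdeg J) / poch (1 + alpha) (Posz (mdeg J)) / mfact C J
  else 0.

Definition HA (C : numClosedFieldType) m n (a : C) (b c : 'I_m -> C)
  : fps C m n := fun I J =>
  poch a (Posz (mdeg I) - Posz (mdeg J)) * mpoch b I / mpoch c I
    / mfact C I / mfact C J.

(* k-th term (k >= 1) of the outer sum on the right-hand side:
   sum_{l=1}^k sum_{|i|=k, |j|=l} coef * x^i/i! * y^j/j! *
      F_A(a+k, b+i; c+i; x) * J_{-a+l}(y) *)
Definition rhs_term (C : numClosedFieldType) m n (a : C) (b c : 'I_m -> C)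
  (k : nat) : fps C m n := fun I J =>
  \sum_(l0 < k)
   let l := l0.+1 in
   \sum_(ib : {ffun 'I_m -> 'I_k.+1} | mdeg (of_bounded ib) == k)
    let i := of_bounded ib in
    \sum_(jb : {ffun 'I_n -> 'I_l.+1} | mdeg (of_bounded jb) == l)
     let j := of_bounded jb in
     ((-1) ^+ (k + l) * (k`!)%:R * ((k.-1)`!)%:R * mpoch b i
       / (((l.-1)`!)%:R * ((k - l)`!)%:R * poch (1 - a) (Posz l) * mpoch c i)
       / mfact C i / mfact C j) *
     fps_mul (fps_mul (@fps_mono C m n i j)
                      (@FA C m n (a + k%:R) (fun s => b s + (i s)%:R)
                                       (fun s => c s + (i s)%:R)))
             (@BesselJ C m n (- a + l%:R)) I J.

From HB Require Import structures.
From mathcomp Require Import all_boot all_order all_algebra.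
From mathcomp Require Import ring zify.
From Stdlib Require Import FunctionalExtensionality.
Set Implicit Arguments. Unset Strict Implicit. Unset Printing Implicit Defensive.
Import GRing.Theory Num.Theory.
Local Open Scope ring_scope.

(* Compare the coefficients of [x^I y^J], with [N = |I|] and [M = |J|].  In the [k]-th
   term every product is a monomial times a series in [x] times a series in [y], so its
   coefficient is a finite sum over [i <= I], [|i| = k] and [j <= J], [|j| = l].  The
   Pochhammer factors telescope ([(b)_i (b+i)_(I-i) = (b)_I] and
   [(1-a)_l (1-a+l)_(M-l) = (1-a)_M]), the factorials sum to [C(N,k)/I!] and [C(M,l)/J!]
   by the multinomial Vandermonde identity, and the sum over [l] is a Vandermonde
   convolution equal to [(M)_k].  Hence the [k]-th term contributes
   [(b)_I / ((c)_I (1-a)_M I! J!) * (-1)^(M+k) C(N,k) (a+k)_(N-k) (M)_k], which vanishes for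
   [k > N] (so the series converges formally).  By Chu-Vandermonde,
   [sum_k C(N,k) (-1)^k (a+k)_(N-k) (M)_k = (a-M)_N]; the term [k = 0] is the coefficient of
   [F_A J_(-a)], and since [a] is not an integer, [(1-a)_M (a)_(N-M) = (-1)^M (a-M)_N]
   identifies the full sum with the coefficient of [H_A]. *)

Section MultiIndices.
Variable m : nat.
Implicit Types (x I : midx m) (P : pred (midx m)).

Definition le_midx x I : bool := [forall s, (x s <= I s)%N].

Lemma of_bounded_inj K : injective (@of_bounded m K).
Proof.
move=> p q /ffunP E; apply/ffunP=> s; apply/val_inj.
by have := E s; rewrite !ffunE.
Qed.

Definition bounded_midx K P : seq (midx m) :=
  [seq of_bounded p | p <- enum [pred p : {ffun 'I_m -> 'I_K.+1} | P (of_bounded p)]].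

Lemma uniq_bounded_midx K P : uniq (bounded_midx K P).
Proof. by rewrite map_inj_uniq ?enum_uniq //; apply: of_bounded_inj. Qed.

Lemma mem_bounded_midx K P x :
  (x \in bounded_midx K P) = P x && [forall s, (x s <= K)%N].
Proof.
apply/mapP/andP => [[p] | [Px /forallP xK]].
  rewrite mem_enum inE => Pp ->; split=> //.
  by apply/forallP=> s; rewrite ffunE -ltnS ltn_ord.
have xE : of_bounded [ffun s => inord (x s) : 'I_K.+1] = x.
  by apply/ffunP=> s; rewrite !ffunE inordK // ltnS.
by exists [ffun s => inord (x s)]; rewrite // mem_enum inE xE.
Qed.

Lemma big_bounded_midx (R : nmodType) K P (F : midx m -> R) :
  \sum_(p : {ffun 'I_m -> 'I_K.+1} | P (of_bounded p)) F (of_bounded p)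
  = \sum_(x <- bounded_midx K P) F x.
Proof. by rewrite /bounded_midx big_map big_enum. Qed.

Lemma big_bounded_widen (R : nmodType) K K' P (F : midx m -> R) :
  (forall x, P x -> forall s, (x s <= K)%N && (x s <= K')%N) ->
  \sum_(p : {ffun 'I_m -> 'I_K.+1} | P (of_bounded p)) F (of_bounded p)
  = \sum_(p : {ffun 'I_m -> 'I_K'.+1} | P (of_bounded p)) F (of_bounded p).
Proof.
move=> PK; rewrite !big_bounded_midx; apply/perm_big/uniq_perm;
  rewrite ?uniq_bounded_midx // => x.
rewrite !mem_bounded_midx; case Px: (P x) => //=.
by apply/forallP/forallP => _ s; have /andP[] := PK x Px s.
Qed.

Lemma big_bounded_pred1 (R : nmodType) K P (F : midx m -> R) x0 :
  (P x0 -> forall s, (x0 s <= K)%N) ->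
  (forall x, P x -> x != x0 -> F x = 0) ->
  \sum_(x <- bounded_midx K P) F x = if P x0 then F x0 else 0.
Proof.
move=> x0K F0; have supp x : x \in bounded_midx K P -> P x.
  by rewrite mem_bounded_midx => /andP[].
case Px0: (P x0); last first.
  rewrite big1_seq // => x /andP[_ /supp Px].
  by apply: F0 => //; apply: contraFneq Px0 => <-.
have x0_in : x0 \in bounded_midx K P by rewrite mem_bounded_midx Px0; apply/forallP/x0K.
rewrite (bigD1_seq x0) ?uniq_bounded_midx //= big1_seq ?addr0 // => x /andP[x_x0 /supp].
by move=> Px; apply: F0.
Qed.

Lemma le_midx_refl x : le_midx x x.
Proof. exact/forallP. Qed.

Lemma le0_midx x : le_midx (mzero m) x.
Proof. by apply/forallP => s; rewrite ffunE. Qed.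

Lemma leq_coord_mdeg x s : (x s <= mdeg x)%N.
Proof. by rewrite /mdeg (bigD1 s) //= leq_addr. Qed.

Lemma le_midx_mdeg x I : le_midx x I -> (mdeg x <= mdeg I)%N.
Proof. by move=> /forallP xI; apply: leq_sum => s _. Qed.

Lemma le_midx_coord x I : le_midx x I -> forall s, (x s <= mdeg I)%N.
Proof. by move=> /forallP xI s; apply: leq_trans (xI s) (leq_coord_mdeg I s). Qed.

Lemma msubnn x : msub x x = mzero m.
Proof. by apply/ffunP => s; rewrite !ffunE subnn. Qed.

Lemma msub0 x : msub x (mzero m) = x.
Proof. by apply/ffunP => s; rewrite !ffunE subn0. Qed.

Lemma msub_eq0 x I : le_midx x I -> (msub I x == mzero m) = (I == x).
Proof.
move=> /forallP xI; apply/eqP/eqP => [/ffunP E | ->]; last exact: msubnn.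
apply/ffunP => s; apply/eqP; rewrite eqn_leq xI andbT -subn_eq0.
by have := E s; rewrite !ffunE => ->.
Qed.

Lemma mdeg_msub x I : le_midx x I -> mdeg (msub I x) = (mdeg I - mdeg x)%N.
Proof.
move=> xI; apply/eqP; rewrite -(eqn_add2r (mdeg x)) subnK ?le_midx_mdeg //.
rewrite /mdeg -big_split /=; apply/eqP/eq_bigr => s _.
by rewrite ffunE subnK //; move/forallP: xI.
Qed.

End MultiIndices.

Section Products.
Variables (C : numClosedFieldType) (m n : nat).
Implicit Types (f g : fps C m n) (i I : midx m) (j J : midx n) (a al : C) (b c : 'I_m -> C).

Lemma fps_mulE f g I J :
  fps_mul f g I J =
  \sum_(x <- bounded_midx (mdeg I) (fun x => le_midx x I))
   \sum_(y <- bounded_midx (mdeg J) (fun y => le_midx y J)) f x y * g (msub I x) (msub J y).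
Proof.
rewrite /bounded_midx big_map big_enum; apply: eq_big => [p|p _] /=.
  by apply: eq_forallb => s; rewrite ffunE.
rewrite big_map big_enum; apply: eq_bigl => q /=.
by apply: eq_forallb => s; rewrite ffunE.
Qed.

Lemma fps_mul_mono g i j I J :
  fps_mul (fps_mono C i j) g I J =
  if le_midx i I && le_midx j J then g (msub I i) (msub J j) else 0.
Proof.
rewrite fps_mulE (big_bounded_pred1 (x0 := i)) => [|/le_midx_coord//|x _ x_i]; last first.
- by rewrite big1_seq // => y _; rewrite /fps_mono (negbTE x_i) mul0r.
case: ifP => iI //=; rewrite (big_bounded_pred1 (x0 := j)) => [|/le_midx_coord//|y _ y_j].
- by rewrite /fps_mono !eqxx mul1r; case: ifP.
- by rewrite /fps_mono (negbTE y_j) andbF mul0r.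
Qed.

Lemma fps_mul_supp f g j0 I J :
  (forall i j, j != j0 -> f i j = 0) ->
  (forall i j, i != mzero m -> g i j = 0) ->
  fps_mul f g I J = if le_midx j0 J then f I j0 * g (mzero m) (msub J j0) else 0.
Proof.
move=> f0 g0; rewrite fps_mulE (big_bounded_pred1 (x0 := I)) => [|/le_midx_coord//|x xI x_I].
- rewrite le_midx_refl msubnn (big_bounded_pred1 (x0 := j0)) => [//|/le_midx_coord//|y _ y_j0].
  by rewrite f0 ?mul0r.
- rewrite big1_seq // => y _; rewrite g0 ?mulr0 //.
  by rewrite (msub_eq0 xI) eq_sym.
Qed.

Lemma FA_eq0 a b c i j : j != mzero n -> FA a b c i j = 0.
Proof. by rewrite /FA => /negbTE ->. Qed.

Lemma BesselJ_eq0 al i j : i != mzero m -> BesselJ al i j = 0.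
Proof. by rewrite /BesselJ => /negbTE ->. Qed.

Lemma coef_FA_BesselJ a b c I J :
  fps_mul (FA a b c) (BesselJ (- a)) I J =
  poch a (Posz (mdeg I)) * mpoch b I / mpoch c I / mfact C I *
  ((-1) ^+ mdeg J / poch (1 - a) (Posz (mdeg J)) / mfact C J).
Proof.
rewrite (fps_mul_supp (j0 := mzero n)) => [|i j|i j]; last 2 first.
- exact: FA_eq0.
- exact: BesselJ_eq0.
by rewrite le0_midx msub0 /FA /BesselJ !eqxx.
Qed.

Lemma coef_mono_FA_BesselJ a b c al i j I J :
  fps_mul (fps_mul (fps_mono C i j) (FA a b c)) (BesselJ al) I J =
  if le_midx i I && le_midx j J then
    poch a (Posz (mdeg (msub I i))) * mpoch b (msub I i) / mpoch c (msub I i)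
      / mfact C (msub I i) *
    ((-1) ^+ mdeg (msub J j) / poch (1 + al) (Posz (mdeg (msub J j)))
      / mfact C (msub J j))
  else 0.
Proof.
rewrite (fps_mul_supp (j0 := j)) => [|i' j'|i' j']; last 2 first.
- rewrite fps_mul_mono; case: ifP => // /andP[_ jj'] j'_j.
  by rewrite FA_eq0 // msub_eq0.
- exact: BesselJ_eq0.
rewrite fps_mul_mono msubnn le_midx_refl andbT.
by case: (le_midx j J); case: (le_midx i I); rewrite //= /FA /BesselJ !eqxx ?mul0r.
Qed.

End Products.

Lemma fact_rising_bin M k : (k`! * 'C((M + k).-1, k))%N = (\prod_(t < k) (M + t))%N.
Proof.
elim: k => [|k IH]; first by rewrite big_ord0 bin0.
rewrite big_ord_recr /= -IH addnS /= factS -[RHS]mulnA (mulnC 'C(_, k)) mul_bin_diag.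
by rewrite [RHS]mulnCA [RHS]mulnA.
Qed.

Section Rising.
Variable R : comPzRingType.
Implicit Types (x y : R).

Definition rising x n : R := \prod_(t < n) (x + t%:R).

Lemma rising0 x : rising x 0 = 1.
Proof. exact: big_ord0. Qed.

Lemma risingS x n : rising x n.+1 = rising x n * (x + n%:R).
Proof. exact: big_ord_recr. Qed.

Lemma risingSl x n : rising x n.+1 = x * rising (x + 1) n.
Proof.
rewrite /rising big_ord_recl addr0; congr (_ * _); apply: eq_bigr => t _.
by rewrite lift0 -addn1 natrD addrAC addrA.
Qed.

Lemma rising_add x p q : rising x (p + q) = rising x p * rising (x + p%:R) q.
Proof.
elim: q => [|q IH]; first by rewrite addn0 rising0 mulr1.
by rewrite addnS !risingS IH natrD addrA mulrA.
Qed.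

Lemma rising_nat M k : rising M%:R k = (k`! * 'C((M + k).-1, k))%:R.
Proof. by rewrite fact_rising_bin natr_prod; apply: eq_bigr => t _; rewrite natrD. Qed.

Lemma prod_subS_rising x n : \prod_(t < n) (x - t.+1%:R) = rising (x - n%:R) n.
Proof.
rewrite (reindex_inj rev_ord_inj); apply: eq_bigr => t _ /=.
by rewrite subnSK // (natrB _ (ltnW (ltn_ord t))); ring.
Qed.

Lemma rising_1sub x n : rising (1 - x) n = (-1) ^+ n * rising (x - n%:R) n.
Proof.
rewrite -prod_subS_rising -[n in (-1) ^+ n]card_ord -prodrN.
by apply: eq_bigr => t _; rewrite -addn1 natrD; ring.
Qed.

(* Chu-Vandermonde, [(-1)^k (y)_k] being the falling factorial of [-y]. *)
Lemma rising_sub_binomial y N x :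
  \sum_(k < N.+1) 'C(N, k)%:R * (-1) ^+ k * rising (x + k%:R) (N - k) * rising y k
  = rising (x - y) N.
Proof.
elim: N x => [|N IH] x.
  by rewrite big_ord_recl big_ord0 bin0 subn0 addr0 !rising0 !mulr1.
pose G k := 'C(N, k)%:R * (-1) ^+ k * rising (x + k%:R) (N.+1 - k) * rising y k.
pose H k := 'C(N, k)%:R * (-1) ^+ k.+1 * rising (x + k.+1%:R) (N - k) * rising y k.+1.
have split_binS : \sum_(k < N.+2) 'C(N.+1, k)%:R * (-1) ^+ k
      * rising (x + k%:R) (N.+1 - k) * rising y k = \sum_(k < N.+1) G k + \sum_(k < N.+1) H k.
  transitivity (\sum_(k < N.+2) G k + \sum_(k < N.+1) H k); last first.
    by rewrite big_ord_recr /= /G bin_small // !mul0r addr0.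
  rewrite big_ord_recl [X in _ = X + _]big_ord_recl -addrA -big_split /= !bin0.
  congr (_ + _); first by rewrite /G bin0.
  by apply: eq_bigr => k _; rewrite /bump /= add1n binS natrD /G /H subSS; ring.
have GH k : (k < N.+1)%N -> G k + H k = (x - y) * ('C(N, k)%:R * (-1) ^+ k
      * rising (x + 1 + k%:R) (N - k) * rising y k).
  rewrite ltnS => kN; rewrite /G /H subSn // risingSl risingS exprS.
  have -> : x + k.+1%:R = x + k%:R + 1 by rewrite -addn1 natrD addrA.
  by rewrite [x + 1 + _]addrAC; ring.
rewrite split_binS -big_split /=; under eq_bigr => k _ do rewrite GH //.
by rewrite -mulr_sumr IH risingSl [x + 1 - y]addrAC.
Qed.

End Rising.

Section FactorialQuotients.
Variable F : numFieldType.

Lemma natr_fact_neq0 k : (k`!)%:R != 0 :> F.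
Proof. by rewrite pnatr_eq0 -lt0n fact_gt0. Qed.

(* Vandermonde's convolution turns the sum into [(k+1)! C(M + k, k + 1)]. *)
Lemma sum_binomial_rising M k :
  \sum_(l < k.+1) k.+1`!%:R * k`!%:R / (l`!%:R * (k.+1 - l.+1)`!%:R) * 'C(M, l.+1)%:R
  = rising (M%:R : F) k.+1.
Proof.
have binE (l : 'I_k.+1) : k.+1`!%:R * k`!%:R / (l`!%:R * (k.+1 - l.+1)`!%:R)
    * 'C(M, l.+1)%:R = k.+1`!%:R * ('C(M, l.+1) * 'C(k, k - l))%:R :> F.
  have lk : (l <= k)%N by rewrite -ltnS.
  rewrite subSS bin_sub // -(bin_fact lk) !natrM.
  by field; rewrite !natr_fact_neq0.
rewrite (eq_bigr _ (fun l _ => binE l)) -mulr_sumr -natr_sum rising_nat addnS -natrM.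
have := binomial.Vandermonde M k k.+1.
rewrite big_ord_recl /= subn0 (bin_small (ltnSn k)) muln0 add0n => <-.
by congr (_ %:R); congr (_ * _)%N; apply: eq_bigr => l _; rewrite lift0 subSS.
Qed.

End FactorialQuotients.

Lemma poch_nat (C : numClosedFieldType) (x : C) k : poch x (Posz k) = rising x k.
Proof. by []. Qed.

Lemma mpoch_msub (C : numClosedFieldType) m (b : 'I_m -> C) (i I : midx m) :
  le_midx i I -> mpoch b I = mpoch b i * mpoch (fun s => b s + (i s)%:R) (msub I i).
Proof.
move=> /forallP iI; rewrite /mpoch -big_split /=; apply: eq_bigr => s _.
by rewrite ffunE -rising_add subnKC.
Qed.

Section Pochhammer.
Variables (C : numClosedFieldType) (a : C).
Hypothesis a_notint : forall z : int, a != z%:~R.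

Lemma rising_sub_neq0 n : rising (a - n%:R) n != 0.
Proof.
rewrite -prod_subS_rising prodf_seq_neq0; apply/allP => t _ /=.
by rewrite subr_eq0 (a_notint t.+1).
Qed.

Lemma rising_1sub_neq0 n : rising (1 - a) n != 0.
Proof. by rewrite rising_1sub mulf_neq0 ?signr_eq0 ?rising_sub_neq0. Qed.

(* For [N < M], [poch a (N - M)] is the inverse of [rising (a - (M - N)) (M - N)]. *)
Lemma rising_1sub_poch N M :
  rising (1 - a) M * poch a (Posz N - Posz M) = (-1) ^+ M * rising (a - M%:R) N.
Proof.
rewrite rising_1sub -mulrA; congr (_ * _).
have [MN | NM] := leqP M N.
  have -> : Posz N - Posz M = Posz (N - M) by lia.
  by rewrite -{2}(subnKC MN) rising_add subrK.
have -> : Posz N - Posz M = Negz (M - N).-1 by rewrite NegzE; lia.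
rewrite /poch prednK ?subn_gt0 // (prod_subS_rising a (M - N)).
have -> : rising (a - M%:R) M = rising (a - M%:R) N * rising (a - (M - N)%:R) (M - N).
  have -> : a - (M - N)%:R = a - M%:R + N%:R by rewrite (natrB _ (ltnW NM)); ring.
  by rewrite -rising_add subnKC // ltnW.
by rewrite mulrK // unitfE rising_sub_neq0.
Qed.

End Pochhammer.

Section MultinomialVandermonde.
Variables (C : numClosedFieldType) (m : nat).
Implicit Types (i I : midx m).

Lemma coef_X1_exp N k : (('X + 1 : {poly C}) ^+ N)`_k = 'C(N, k)%:R.
Proof.
rewrite exprD1n coef_sum.
under eq_bigr => t _ do rewrite coefMn coefXn.
have [kN | Nk] := ltnP k N.+1; last first.
  rewrite big1 ?bin_small // => t _.
  by rewrite (gtn_eqF (leq_trans (ltn_ord t) Nk)) mul0rn.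
rewrite (bigD1 (Ordinal kN)) //= eqxx big1 ?addr0 // => t /negbTE t_k.
by rewrite -val_eqE /= in t_k; rewrite eq_sym t_k mul0rn.
Qed.

Lemma mfactV_msub i I : le_midx i I ->
  (mfact C i)^-1 * (mfact C (msub I i))^-1 = (\prod_(s < m) 'C(I s, i s)%:R) / mfact C I.
Proof.
move=> /forallP iI; rewrite /mfact -!prodfV -!big_split /=; apply: eq_bigr => s _.
rewrite ffunE -(bin_fact (iI s)) !natrM; field.
by rewrite !natr_fact_neq0 pnatr_eq0 -lt0n bin_gt0 iI.
Qed.

(* Compare the coefficients of [X^k] in [\prod_s (X + 1)^(I s) = (X + 1)^|I|]. *)
Lemma sum_prod_binomial I k :
  \sum_(f : {ffun 'I_m -> 'I_(mdeg I).+1} | mdeg (of_bounded f) == k)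
     \prod_(s < m) 'C(I s, f s)%:R = 'C(mdeg I, k)%:R :> C.
Proof.
set N := mdeg I.
pose P : {poly C} := \prod_(s < m) \sum_(t < N.+1) 'C(I s, t)%:R *: 'X^t.
have PE : P = ('X + 1) ^+ N.
  rewrite /P /N /mdeg -prodrXr; apply: eq_bigr => s _.
  rewrite exprD1n (big_ord_widen N.+1 (fun t => 'X^t *+ 'C(I s, t)));
    last by rewrite ltnS leq_coord_mdeg.
  rewrite [RHS]big_mkcond /=; apply: eq_bigr => t _.
  by rewrite scaler_nat; case: ltnP => // It; rewrite bin_small.
have PE' : P = \sum_(f : {ffun 'I_m -> 'I_N.+1})
     (\prod_(s < m) 'C(I s, f s)%:R) *: 'X^(mdeg (of_bounded f)).
  rewrite /P bigA_distr_bigA /=; apply: eq_bigr => f _.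
  rewrite -mul_polyC rmorph_prod /mdeg -prodrXr -big_split /=.
  by apply: eq_bigr => s _; rewrite ffunE mul_polyC.
have := congr1 (fun p : {poly C} => p`_k) (etrans (esym PE) PE').
rewrite /= coef_X1_exp coef_sum => ->; rewrite big_mkcond /=; apply: eq_bigr => f _.
by rewrite coefZ coefXn eq_sym; case: eqP; rewrite ?mulr1 ?mulr0.
Qed.

Lemma sum_mfactV I k :
  \sum_(p : {ffun 'I_m -> 'I_k.+1} | mdeg (of_bounded p) == k)
    (if le_midx (of_bounded p) I then
       (mfact C (of_bounded p))^-1 * (mfact C (msub I (of_bounded p)))^-1 else 0)
  = 'C(mdeg I, k)%:R / mfact C I.
Proof.
rewrite -big_mkcondr /= -(sum_prod_binomial I k) mulr_suml.
under eq_bigr => p /andP[_ pI] do rewrite mfactV_msub //.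
rewrite (big_bounded_widen (K' := mdeg I)
  (P := fun x => (mdeg x == k) && le_midx x I)
  (fun x => (\prod_(s < m) 'C(I s, x s)%:R) / mfact C I)) => [|x /andP[/eqP xk xI] s].
  rewrite big_mkcondr /=; apply: eq_bigr => f _.
  have obE s : of_bounded f s = f s by rewrite ffunE.
  under eq_bigr => s _ do rewrite obE.
  case: ifP => // /negbT; rewrite negb_forall => /existsP[s]; rewrite obE -ltnNge => Is.
  by rewrite (bigD1 s) //= bin_small ?mul0r.
by rewrite le_midx_coord // -xk leq_coord_mdeg.
Qed.

End MultinomialVandermonde.

Section Coefficients.
Variables (C : numClosedFieldType) (m n : nat) (a : C) (b c : 'I_m -> C).
Implicit Types (i I : midx m) (j J : midx n).

Definition rhs_weight N M k l : C :=
  (-1) ^+ (k + M) * k`!%:R * (k.-1)`!%:R / ((l.-1)`!%:R * (k - l)`!%:R)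
  * rising (a + k%:R) (N - k).

Definition coef_prefactor I M : C := mpoch b I / mpoch c I / rising (1 - a) M.

(* No hypothesis on [c] is needed: [(c)_i (c+i)_(I-i) = (c)_I] holds even when some factor
   vanishes, since [x^-1] is [0] at [0] on both sides. *)
Lemma coef_rhs_summand i I j J k l :
  le_midx i I -> le_midx j J -> mdeg i = k -> mdeg j = l ->
  ((-1) ^+ (k + l) * k`!%:R * (k.-1)`!%:R * mpoch b i
     / ((l.-1)`!%:R * (k - l)`!%:R * poch (1 - a) (Posz l) * mpoch c i)
     / mfact C i / mfact C j) *
  (poch (a + k%:R) (Posz (mdeg (msub I i))) * mpoch (fun s => b s + (i s)%:R) (msub I i)
     / mpoch (fun s => c s + (i s)%:R) (msub I i) / mfact C (msub I i) *
   ((-1) ^+ mdeg (msub J j) / poch (1 + (- a + l%:R)) (Posz (mdeg (msub J j)))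
     / mfact C (msub J j)))
  = rhs_weight (mdeg I) (mdeg J) k l * coef_prefactor I (mdeg J)
    * ((mfact C i)^-1 * (mfact C (msub I i))^-1)
    * ((mfact C j)^-1 * (mfact C (msub J j))^-1).
Proof.
move=> iI jJ <- <-; have lM := le_midx_mdeg jJ.
rewrite !mdeg_msub // /rhs_weight /coef_prefactor (mpoch_msub b iI) (mpoch_msub c iI).
have -> : rising (1 - a) (mdeg J)
    = rising (1 - a) (mdeg j) * rising (1 - a + (mdeg j)%:R) (mdeg J - mdeg j).
  by rewrite -rising_add subnKC.
have -> : (-1) ^+ (mdeg i + mdeg J)
    = (-1) ^+ (mdeg i + mdeg j) * (-1) ^+ (mdeg J - mdeg j) :> C.
  by rewrite -exprD -addnA subnKC.
rewrite !poch_nat addrA !invfM; ring.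
Qed.

Lemma coef_rhs_term k I J :
  rhs_term a b c k I J =
  \sum_(l < k) rhs_weight (mdeg I) (mdeg J) k l.+1 * coef_prefactor I (mdeg J)
     * ('C(mdeg I, k)%:R / mfact C I) * ('C(mdeg J, l.+1)%:R / mfact C J).
Proof.
apply: eq_bigr => l _ /=; rewrite -(sum_mfactV C I k) -(sum_mfactV C J l.+1).
rewrite -[RHS]mulrA big_distrlr mulr_sumr; apply: eq_bigr => p /eqP pk.
rewrite mulr_sumr; apply: eq_bigr => q /eqP ql.
rewrite coef_mono_FA_BesselJ.
case pI: (le_midx _ I); case qJ: (le_midx _ J); rewrite /= ?(mulr0, mul0r) //.
by rewrite coef_rhs_summand // mulrA.
Qed.

Lemma coef_rhs_termS k I J :
  rhs_term a b c k.+1 I J =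
  coef_prefactor I (mdeg J) / mfact C I / mfact C J * (-1) ^+ mdeg J *
  ('C(mdeg I, k.+1)%:R * (-1) ^+ k.+1 * rising (a + k.+1%:R) (mdeg I - k.+1)
   * rising (mdeg J)%:R k.+1).
Proof.
rewrite coef_rhs_term -sum_binomial_rising !mulr_sumr; apply: eq_bigr => l _.
by rewrite /rhs_weight exprD; ring.
Qed.

Lemma rhs_term_eq0 k I J : (mdeg I <= k)%N -> rhs_term a b c k.+1 I J = 0.
Proof. by move=> Ik; rewrite coef_rhs_termS bin_small // !(mul0r, mulr0). Qed.

Hypothesis a_notint : forall z : int, a != z%:~R.

Lemma sum_rhs_term I J :
  \sum_(k < mdeg I) rhs_term a b c k.+1 I J =
  HA a b c I J - fps_mul (FA a b c) (BesselJ (- a)) I J.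
Proof.
set N := mdeg I; set M := mdeg J.
under eq_bigr => k _ do rewrite coef_rhs_termS.
have chu : \sum_(k < N) 'C(N, k.+1)%:R * (-1) ^+ k.+1 * rising (a + k.+1%:R) (N - k.+1)
    * rising M%:R k.+1 = rising (a - M%:R) N - rising a N.
  rewrite -(rising_sub_binomial M%:R N a) big_ord_recl /=.
  by rewrite bin0 expr0 rising0 subn0 addr0 !mulr1 mul1r addrC addKr.
rewrite -mulr_sumr chu coef_FA_BesselJ /HA /coef_prefactor -/N -/M !poch_nat.
have -> : poch a (Posz N - Posz M)
    = (rising (1 - a) M)^-1 * ((-1) ^+ M * rising (a - M%:R) N).
  by rewrite -(rising_1sub_poch a_notint) mulKf ?rising_1sub_neq0.
by ring.
Qed.

End Coefficients.

Theorem mainTheorem15 (C : numClosedFieldType) (m n : nat) (a : C)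
  (b c : 'I_m -> C)
  (ha : forall z : int, a != z%:~R)
  (hc : forall (s : 'I_m) (t : nat), c s != - t%:R) :
  exists S : fps C m n,
    fps_hasSum (fun k => @rhs_term C m n a b c k.+1) S /\
    @HA C m n a b c =
      fps_add (fps_mul (@FA C m n a b c) (@BesselJ C m n (- a))) S.
Proof.
exists (fun I J => HA a b c I J - fps_mul (FA a b c) (BesselJ (- a)) I J); split.
  move=> I J; exists (mdeg I) => K IK.
  rewrite /= -sum_rhs_term // (big_ord_widen _ (fun k => rhs_term a b c k.+1 I J) IK).
  rewrite [RHS]big_mkcond /=.
  by apply: eq_bigr => k _; case: ltnP => // Ik; rewrite rhs_term_eq0.
apply: functional_extensionality => I; apply: functional_extensionality => J.
by rewrite /fps_add addrC subrK.
Qed.
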